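(* In the game $\mathcal{B}_0(120,6)$, every pure strategy $s\in S$ that allocates a positive number of units to at most two battlefields (i.e. $|\{k:s_k>0\}|\le 2$) is not used with positive probability in any Nash equilibrium.
   Context: Fix integers $N\ge1$, $K\ge2$ and a real number $\alpha$. The Colonel Blotto game $\mathcal{B}_\alpha(N,K)$ is the two-player simultaneous-move game with players $A,B$, each with pure strategy set $S=\{s\in\{0,1,\ldots,N\}^K:\sum_{k=1}^K s_k=N\}$, in which the payoff of player $i$ at the pure profile $(s^i,s^{-i})$ is $\pi^i(s^i,s^{-i})=\sum_{k=1}^K\big(\mathbf 1[s^i_k>s^{-i}_k]+\tfrac{\alpha}{2}\mathbf 1[s^i_k=s^{-i}_k]\big)$. Mixed strategies are probability distributions on $S$, with expected payoffs under independent randomization; a Nash equilibrium is a mixed profile from which no unilateral deviation raises a player's expected payoff. *)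

From HB Require Import structures.
From mathcomp Require Import all_boot all_order all_algebra.
From mathcomp Require Import reals.
Set Implicit Arguments. Unset Strict Implicit. Unset Printing Implicit Defensive.
Import Order.TTheory GRing.Theory Num.Theory.
Local Open Scope ring_scope.

Definition strat (N K : nat) : predArgType :=
  {f : {ffun 'I_K -> 'I_N.+1} | (\sum_(k < K) (f k : nat) == N)%N}.

Definition alloc (N K : nat) (s : strat N K) (k : 'I_K) : nat := val s k.

Definition payoff (R : realType) (alpha : R) (N K : nat) (s t : strat N K) : R :=
  \sum_(k < K) (((alloc t k < alloc s k)%N)%:R
                + alpha / 2%:R * ((alloc s k == alloc t k))%:R).

Definition is_mixed (R : realType) (N K : nat) (p : {ffun strat N K -> R}) : Prop :=
  (forall s, 0 <= p s) /\ \sum_(s : strat N K) p s = 1.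

Definition exp_payoff (R : realType) (alpha : R) (N K : nat)
  (p q : {ffun strat N K -> R}) : R :=
  \sum_(s : strat N K) \sum_(t : strat N K) p s * q t * payoff alpha s t.

Definition nash (R : realType) (alpha : R) (N K : nat)
  (pA pB : {ffun strat N K -> R}) : Prop :=
  [/\ is_mixed pA, is_mixed pB,
      (forall p, is_mixed p -> exp_payoff alpha p pB <= exp_payoff alpha pA pB)
    & (forall q, is_mixed q -> exp_payoff alpha q pA <= exp_payoff alpha pB pA)].

(* A pure strategy with at most two positive entries wins at most two
   battlefields against any opponent.  The uniform mixture of the six cyclic
   shifts of the allocation (1, 6, 13, 22, 33, 45) wins more: at a battlefield
   where the opponent puts x units, at least (40 - x)/9 of the six shifts beat
   it, so summing over the battlefields the six shifts together win at least
   (6 * 40 - 120)/9 > 13 battles, i.e. more than two per shift on average.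
   A strictly dominated pure strategy is never played in a best response. *)
From HB Require Import structures.
From mathcomp Require Import all_boot all_order all_algebra.
From mathcomp Require Import reals.
From mathcomp Require Import zify.
Set Implicit Arguments. Unset Strict Implicit. Unset Printing Implicit Defensive.
Import Order.TTheory GRing.Theory Num.Theory.
Local Open Scope ring_scope.

Lemma sumr_delta (R : pzSemiRingType) (T : finType) (a : T) (F : T -> R) :
  \sum_x (x == a)%:R * F x = F a.
Proof.
rewrite (bigD1 a) //= eqxx mul1r big1 ?addr0 // => x /negbTE ->.
by rewrite mul0r.
Qed.

Section BestResponse.
Variables (R : realType) (alpha : R) (N K : nat).
Implicit Types (p q m : {ffun strat N K -> R}) (s t : strat N K).

Definition pure_payoff q s : R := \sum_t q t * payoff alpha s t.

Lemma exp_payoffE p q : exp_payoff alpha p q = \sum_s p s * pure_payoff q s.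
Proof.
apply: eq_bigr => s _; rewrite mulr_sumr.
by apply: eq_bigr => t _; rewrite mulrA.
Qed.

Lemma pure_payoff_lt q s m : is_mixed q ->
  (forall t, payoff alpha s t < \sum_x m x * payoff alpha x t) ->
  pure_payoff q s < \sum_x m x * pure_payoff q x.
Proof.
move=> [q_ge0 q_sum1] dom; rewrite -subr_gt0.
have -> : \sum_x m x * pure_payoff q x - pure_payoff q s =
    \sum_t q t * (\sum_x m x * payoff alpha x t - payoff alpha s t).
  rewrite /pure_payoff; under eq_bigr do rewrite mulr_sumr.
  rewrite exchange_big -sumrB; apply: eq_bigr => t _.
  by rewrite mulrBr [in RHS]mulr_sumr; congr (_ - _); apply: eq_bigr => x _; rewrite mulrCA.
have q_sum_neq0 : \sum_t q t <> 0 by rewrite q_sum1; exact/eqP/oner_neq0.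
have [t /andP[_ qt_gt0]] := psumr_neq0P (fun t _ => q_ge0 t) q_sum_neq0.
rewrite (bigD1 t) //= ltr_pwDl ?mulr_gt0 ?subr_gt0 ?dom //.
by apply: sumr_ge0 => x _; rewrite mulr_ge0 ?q_ge0 // subr_ge0 ltW ?dom.
Qed.

(* The deviation moves the mass of [s] onto the dominating mixture [m]. *)
Lemma best_response_dominated p q m s :
  is_mixed p -> is_mixed q -> is_mixed m ->
  (forall p', is_mixed p' -> exp_payoff alpha p' q <= exp_payoff alpha p q) ->
  (forall t, payoff alpha s t < \sum_x m x * payoff alpha x t) ->
  p s = 0.
Proof.
move=> [p_ge0 p_sum1] mq [m_ge0 m_sum1] best dom.
pose p' := [ffun x => p x - p s * (x == s)%:R + p s * m x].
have p'_mixed : is_mixed p'.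
  split=> [x|].
    rewrite ffunE addr_ge0 ?mulr_ge0 //.
    by case: eqP => [->|_]; rewrite ?mulr1 ?subrr // mulr0 subr0.
  under eq_bigr do rewrite ffunE.
  rewrite !big_split /= sumrN -!mulr_sumr m_sum1 p_sum1.
  rewrite (eq_bigr (fun x => (x == s)%:R * 1)) => [|x _]; last by rewrite mulr1.
  by rewrite sumr_delta mulr1 subrK.
have := best p' p'_mixed; rewrite !exp_payoffE.
under eq_bigr do rewrite ffunE !mulrDl mulNr -!mulrA.
rewrite !big_split sumrN /= -!mulr_sumr sumr_delta.
rewrite -addrA gerDl addrC -mulrBr pmulr_lle0 => [p_s_le0|].
  by apply/eqP; rewrite eq_le p_s_le0 p_ge0.
by rewrite subr_gt0 pure_payoff_lt.
Qed.

End BestResponse.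

Section UniformMixture.
Variables (R : realType) (N K n : nat) (f : 'I_n -> strat N K).

Definition uniform_mixture : {ffun strat N K -> R} :=
  [ffun x => n%:R^-1 * \sum_(i < n) (x == f i)%:R].

Lemma sum_uniform_mixture (F : strat N K -> R) :
  \sum_x uniform_mixture x * F x = n%:R^-1 * \sum_(i < n) F (f i).
Proof.
under eq_bigr do rewrite ffunE -mulrA mulr_suml.
rewrite -mulr_sumr exchange_big; congr (_ * _).
by apply: eq_bigr => i _; rewrite sumr_delta.
Qed.

Lemma uniform_mixture_mixed : (0 < n)%N -> is_mixed uniform_mixture.
Proof.
move=> n_gt0; split=> [x|].
  by rewrite ffunE mulr_ge0 ?invr_ge0 ?ler0n ?sumr_ge0.
rewrite (eq_bigr (fun x => uniform_mixture x * 1)) => [|x _]; last by rewrite mulr1.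
by rewrite sum_uniform_mixture sumr_const card_ord mulVf ?pnatr_eq0 -?lt0n.
Qed.

End UniformMixture.

Definition wins N K (s t : strat N K) : nat := \sum_(k < K) (alloc t k < alloc s k).

Lemma payoff0 (R : realType) N K (s t : strat N K) :
  payoff (0 : R) s t = (wins s t)%:R.
Proof.
by rewrite /payoff natr_sum; apply: eq_bigr => k _; rewrite !mul0r addr0.
Qed.

Lemma wins_le_support N K (s t : strat N K) :
  (wins s t <= #|[set k | 0 < alloc s k]|)%N.
Proof.
rewrite -sum1_card [X in (_ <= X)%N]big_mkcond /=; apply: leq_sum => k _.
by rewrite inE; case: (alloc s k) => [|n]; rewrite ?ltn0 ?leq_b1.
Qed.

Definition ladder (i : 'I_6) : nat := nth 0%N [:: 1; 6; 13; 22; 33; 45]%N i.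

Lemma ladder_beats (x : nat) : (40 <= 9 * \sum_(i < 6) (x < ladder i) + x)%N.
Proof.
case: (leqP 40 x) => [x_ge40|]; first exact: leq_trans x_ge40 (leq_addl _ _).
rewrite !big_ord_recl big_ord0 /=.
by do 40! (case: x => [|x] //=).
Qed.

Lemma sum_ord_translate n (F : 'I_n.+1 -> nat) (k : 'I_n.+1) :
  (\sum_(r < n.+1) F (k + r)%R = \sum_(r < n.+1) F r)%N.
Proof. by rewrite [RHS](reindex_inj (addrI k)). Qed.

Lemma ladder_lt121 (i : 'I_6) : (ladder i < 121)%N.
Proof. by case: i => -[|[|[|[|[|[|]]]]]]. Qed.

Definition ladder_shift_fun (r : 'I_6) : {ffun 'I_6 -> 'I_121} :=
  [ffun k => inord (ladder (k + r))].

Lemma alloc_ladder_shift_fun r k : (ladder_shift_fun r k : nat) = ladder (k + r).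
Proof. by rewrite ffunE inordK ?ladder_lt121. Qed.

Lemma ladder_shift_fun_sum r :
  (\sum_(k < 6) (ladder_shift_fun r k : nat) == 120)%N.
Proof.
under eq_bigr do rewrite alloc_ladder_shift_fun addrC.
by rewrite sum_ord_translate !big_ord_recl big_ord0.
Qed.

Definition ladder_shift (r : 'I_6) : strat 120 6 :=
  exist _ (ladder_shift_fun r) (ladder_shift_fun_sum r).

Lemma ladder_shifts_win (t : strat 120 6) :
  (14 <= \sum_(r < 6) wins (ladder_shift r) t)%N.
Proof.
have cover : (\sum_(r < 6) wins (ladder_shift r) t =
              \sum_(k < 6) \sum_(i < 6) (alloc t k < ladder i))%N.
  rewrite exchange_big; apply: eq_bigr => k _.
  rewrite -(sum_ord_translate _ k); apply: eq_bigr => r _.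
  by rewrite /alloc /= alloc_ladder_shift_fun.
have beats : (\sum_(k < 6) 40 <=
    \sum_(k < 6) (9 * \sum_(i < 6) (alloc t k < ladder i) + alloc t k))%N.
  by apply: leq_sum => k _; exact: ladder_beats.
rewrite big_split -big_distrr /= sum_nat_const card_ord (eqP (valP t)) in beats.
rewrite cover; move: beats; set w := (\sum_(k < 6) _)%N; lia.
Qed.

Lemma sparse_strategy_dominated (R : realType) (s t : strat 120 6) :
  (#|[set k | 0 < alloc s k]| <= 2)%N ->
  payoff (0 : R) s t < \sum_x uniform_mixture R ladder_shift x * payoff 0 x t.
Proof.
move=> sparse; rewrite sum_uniform_mixture payoff0.
under eq_bigr do rewrite payoff0.
rewrite -natr_sum mulrC ltr_pdivlMr ?ltr0n // -natrM ltr_nat.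
have few_wins := leq_trans (wins_le_support s t) sparse.
by apply: leq_trans (ladder_shifts_win t); lia.
Qed.

Theorem corollary2 (R : realType) (pA pB : {ffun strat 120 6 -> R}) :
  nash (0 : R) pA pB ->
  forall s : strat 120 6,
    (#|[set k : 'I_6 | (0 < alloc s k)%N]| <= 2)%N ->
    pA s = 0 /\ pB s = 0.
Proof.
case=> mixedA mixedB bestA bestB s sparse.
have mixture_mixed := uniform_mixture_mixed R ladder_shift isT.
have dominated t := @sparse_strategy_dominated R s t sparse.
split.
- exact: (best_response_dominated (alpha := 0) mixedA mixedB mixture_mixed bestA dominated).
- exact: (best_response_dominated (alpha := 0) mixedB mixedA mixture_mixed bestB dominated).
Qed.
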